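(* Let $\lambda$ be a dominant integral weight of $\mathfrak{sl}_{r+1}$, write $\lambda+\rho=(\ell_1>\ell_2>\cdots>\ell_r>\ell_{r+1}=0)$, and let $b\in\mathcal B(\lambda+\rho)$ with BZL path $\psi_{\mathbf i}(b)=(a_1,\dots,a_N)$. Let $1\le k\le N$ and suppose that $a_k=a_{j,j-i+1}$ in triangular indexing, where $1\le i\le j\le r$ (so that $i_k=i$ and $a_k=\mathbf a_{i,j}$). Put $b'=\tilde e_{i_{k-1}}^{a_{k-1}}\cdots\tilde e_{i_1}^{a_1}b$. Then $\ell_i-\mathbf b_{i,j}$ equals the number of $i$-boxes in the $i$th row of $b'$, and $\ell_{i+1}-\mathbf b_{i+1,j+1}$ equals the number of $(i+1)$-boxes in the $(i+1)$st row of $b'$.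
   Context: Fix $r\ge1$ and $\mathfrak g=\mathfrak{sl}_{r+1}$ with index set $I=\{1,\dots,r\}$, fundamental weights $\omega_1,\dots,\omega_r$, $N=r(r+1)/2$, and $\rho=\sum_i\omega_i$. For a dominant integral weight $\mu=\sum_i m_i\omega_i$, $\mathcal B(\mu)$ is identified (Kashiwara–Nakashima) with the set of semistandard Young tableaux with entries in $\{1,\dots,r+1\}$ of the shape having $m_i$ columns of height $i$; an entry equal to $k$ is a $k$-box. A tableau is identified with the tensor product of its entries read column by column from right to left, each column top to bottom, and $\tilde e_i,\tilde f_i$ act by the signature rule: for each factor write $-$ if it equals $i+1$, $+$ if it equals $i$; repeatedly cancel adjacent $+-$ pairs; $\tilde e_i$ changes the factor of the rightmost remaining $-$ from $i+1$ to $i$ (giving $0$ if none), $\tilde f_i$ changes the factor of the leftmost remaining $+$ from $i$ to $i+1$ (giving $0$ if none). For dominant $\lambda$, $\lambda+\rho$ is viewed as the partition with row lengths $\ell_1>\ell_2>\cdots>\ell_r>\ell_{r+1}=0$ (the shape of tableaux in $\mathcal B(\lambda+\rho)$). Fix the long word $\mathbf i=(i_1,\dots,i_N)=(1,2,1,3,2,1,\dots,r,\dots,2,1)$. The BZL path $\psi_{\mathbf i}(b)=(a_1,\dots,a_N)$: $a_k$ is maximal with $\tilde e_{i_k}^{a_k}\cdots\tilde e_{i_1}^{a_1}b\ne0$. Triangular form: $a_{i,j}=a_{i(i-1)/2+j}$ for $1\le j\le i\le r$; it corresponds to letter $i-j+1$. For $b\in\mathcal B(\lambda+\rho)$ and $1\le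 i\le j\le r$: $\mathbf a_{i,j}$ is the number of $(j+1)$-boxes in rows $1$ through $i$ of $b$; $\mathbf b_{i,j}$ is the number of boxes in the $i$th row of $b$ with entry $\ge j+1$. By convention $\mathbf b_{i,j}=0$ if $i=r+1$ or $j=r+1$. *)

From mathcomp Require Import all_boot.
Set Implicit Arguments. Unset Strict Implicit. Unset Printing Implicit Defensive.

(* A tableau is the list of its rows (top row first); entries are 1..r+1. *)
Definition tableau := seq (seq nat).

(* 1-indexed row access: row T p is the p-th row (empty if absent). *)
Definition row (T : tableau) (p : nat) : seq nat := nth [::] T p.-1.

(* lambda = sum_p m_p omega_p is encoded by m = [:: m_1; ...; m_r].
   lambda + rho = sum_p (m_p + 1) omega_p; its p-th row length is
   ell_p = sum_{q = p}^{r} (m_q + 1)   (so ell_{r+1} = 0). *)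
Definition ell (m : seq nat) (p : nat) : nat :=
  \sum_(p <= q < (size m).+1) (nth 0 m q.-1).+1.

(* Semistandard Young tableau with entries in {1..r+1} and row lengths
   sh 1, ..., sh r (T is an element of B(mu) when sh is the row-length
   function of mu). *)
Definition is_SSYT (r : nat) (sh : nat -> nat) (T : tableau) : Prop :=
  [/\ size T = r,
      forall p, 1 <= p <= r -> size (row T p) = sh p,
      forall p, 1 <= p <= r -> all (fun x => 1 <= x <= r.+1) (row T p),
      forall p, 1 <= p <= r -> sorted leq (row T p)
    & forall p c, 1 <= p < r -> c < size (row T p.+1) ->
        nth 0 (row T p) c < nth 0 (row T p.+1) c].

(* Cells (0-indexed (row, column)) in reading order: columns from right to
   left, each column from top to bottom. *)
Definition ncols (T : tableau) : nat := foldr maxn 0 (map size T).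

Definition cells (T : tableau) : seq (nat * nat) :=
  flatten [seq [seq (k, c) | k <- iota 0 (size T) & c < size (nth [::] T k)]
          | c <- rev (iota 0 (ncols T))].

Definition entry (T : tableau) (kc : nat * nat) : nat :=
  nth 0 (nth [::] T kc.1) kc.2.

Definition word (T : tableau) : seq nat := map (entry T) (cells T).

(* A signature is a list of (position, sign), with
   sign = true for '+' and false for '-'.  cancel1 removes the first
   adjacent '+-' pair; iterating it (size s) times cancels all such pairs
   repeatedly. *)
Fixpoint cancel1 (s : seq (nat * bool)) : seq (nat * bool) :=
  match s with
  | x :: ((y :: s'') as s') => if x.2 && ~~ y.2 then s'' else x :: cancel1 s'
  | _ => s
  end.

Definition reduced (s : seq (nat * bool)) := iter (size s) cancel1 s.

Definition signature (i : nat) (w : seq nat) : seq (nat * bool) :=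
  [seq (q, nth 0 w q == i) | q <- iota 0 (size w)
     & (nth 0 w q == i) || (nth 0 w q == i.+1)].

(* Kashiwara operator e~_i on a tableau; None stands for 0. *)
Definition e_op (i : nat) (T : tableau) : option tableau :=
  let w := word T in
  let minus := [seq q.1 | q <- reduced (signature i w) & ~~ q.2] in
  if minus is [::] then None else
  let kc := nth (0, 0) (cells T) (last 0 minus) in
  Some (set_nth [::] T kc.1 (set_nth 0 (nth [::] T kc.1) kc.2 i)).

Definition e_pow (i n : nat) (T : tableau) : option tableau :=
  iter n (fun o => obind (e_op i) o) (Some T).

(* e~_{w_n}^{a_n} ... e~_{w_1}^{a_1} T  (applied e_{w_1}^{a_1} first). *)
Fixpoint apply_e (ws as_ : seq nat) (T : tableau) : option tableau :=
  match ws, as_ with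
  | i :: ws', a :: as' => obind (apply_e ws' as') (e_pow i a T)
  | _, _ => Some T
  end.

Definition long_word (r : nat) : seq nat :=
  flatten [seq rev (iota 1 p) | p <- iota 1 r].

Definition Nlen (r : nat) : nat := r * r.+1 %/ 2.

(* a = (a_1, ..., a_N) is the BZL path psi_i(T): for each k (here 0-indexed),
   a_k is maximal such that e~_{i_k}^{a_k} ... e~_{i_1}^{a_1} T <> 0. *)
Definition is_BZL_path (r : nat) (T : tableau) (a : seq nat) : Prop :=
  size a = Nlen r /\
  forall k, k < Nlen r ->
    let pre := apply_e (take k (long_word r)) (take k a) T in
    let i := nth 0 (long_word r) k in
    obind (e_pow i (nth 0 a k)) pre <> None /\
    (forall n, obind (e_pow i n) pre <> None -> n <= nth 0 a k).

(* bold b_{p,q}: number of boxes in row p with entry >= q+1;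
   zero by convention when p = r+1 or q = r+1. *)
Definition bb (r : nat) (T : tableau) (p q : nat) : nat :=
  if (p == r.+1) || (q == r.+1) then 0
  else count (fun x => q.+1 <= x) (row T p).

(* For 1 <= t <= j <= r, [stage b j t] relabels b row by row: in row p the
   entries <= j become p and the entries j+1 become max(p, t+1).  The long
   word is the concatenation of the blocks (j, ..., 2, 1), and its letter t
   of block j sits at position tri j + (j - t), with tri j = j(j-1)/2.
   1. A signature -^x +^y (+-)^z reduces to -^x +^y ([e_op_pattern]).
   2. The t-signature of stage b j t has this form: its '-' are the boxes of
      rows 1..t holding j+1 in b, so the maximal power of e~_t lowers them to
      t one at a time and yields stage b j (t-1) ([e_pow_stage]).
   3. A BZL exponent is such a maximal power, so the prefix of the long word
      before letter t of block j maps b to stage b j t ([bzl_prefix_stage]).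
   4. In stage b j i, the i-boxes of row i and the (i+1)-boxes of row i+1 are
      the former entries <= j, resp. <= j+1, of these rows ([count_row_stage]).
   Lemmas index rows and columns from 0; comments number rows from 1. *)

From mathcomp Require Import all_boot zify.
Set Implicit Arguments. Unset Strict Implicit. Unset Printing Implicit Defensive.

(* Entries are compared as atoms; keep [entry T (k, c)] folded. *)
Arguments entry T kc : simpl never.

Definition sign_pattern (x y z : nat) : seq bool :=
  nseq x false ++ nseq y true ++ flatten (nseq z [:: true; false]).

Lemma size_sign_pattern x y z : size (sign_pattern x y z) = x + y + 2 * z.
Proof.
rewrite /sign_pattern !size_cat !size_nseq addnA; congr (_ + _).
by elim: z => [|z IH] //=; rewrite IH; lia.
Qed.

(* A signature without '+-' pairs, such as -^x +^y, is sorted for [implb]. *)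
Lemma sorted_signs x y : sorted implb (nseq x false ++ nseq y true).
Proof.
elim: x => [|x IH] /=; last by case: (nseq x false ++ nseq y true) IH.
by elim: y => [|[|y] IH].
Qed.

Lemma cancel1_catl (u s : seq (nat * bool)) :
  sorted implb (map snd u ++ take 1 (map snd s)) -> cancel1 (u ++ s) = u ++ cancel1 s.
Proof.
elim: u => [|p u IH] //=.
case: u IH => [_ |q u IH] /=.
  by case: s => [|q s] //= /andP [+ _]; case: p.2; case: q.2.
move=> /andP [Hpq Hs]; have /= -> := IH Hs.
by move: Hpq; case: p.2; case: q.2.
Qed.

Lemma cancel1_pattern x y z (s : seq (nat * bool)) :
  map snd s = sign_pattern x y z.+1 -> cancel1 s = take (x + y) s ++ drop (x + y + 2) s.
Proof.
move=> Hs.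
have Hsz : x + y <= size s by rewrite -(size_map snd) Hs size_sign_pattern; lia.
have Hdrop : drop (x + y + 2) s = drop 2 (drop (x + y) s) by rewrite drop_drop addnC.
rewrite Hdrop -{1}(cat_take_drop (x + y) s) cancel1_catl.
- have : map snd (drop (x + y) s) = [:: true, false & flatten (nseq z [:: true; false])].
    by rewrite map_drop Hs /sign_pattern catA drop_size_cat // size_cat !size_nseq.
  by case: (drop (x + y) s) => [|p [|q s']] //= [-> -> _]; rewrite drop0.
rewrite map_take map_drop Hs /sign_pattern catA.
rewrite take_size_cat ?drop_size_cat ?size_cat ?size_nseq //=.
by rewrite -catA -[[:: true]]/(nseq 1 true) -nseqD sorted_signs.
Qed.

Lemma cancel1_sorted (s : seq (nat * bool)) : sorted implb (map snd s) -> cancel1 s = s.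
Proof. by have := @cancel1_catl s [::]; rewrite !cats0. Qed.

Lemma reduced_pattern x y z (s : seq (nat * bool)) :
  map snd s = sign_pattern x y z -> reduced s = take (x + y) s.
Proof.
move=> Hs; rewrite /reduced.
have : z <= size s by rewrite -(size_map snd) Hs size_sign_pattern; lia.
move: (size s) => n; elim: n z s Hs => [|n IH] [|z] s Hs Hz //.
- have Hsz : size s = x + y by rewrite -(size_map snd) Hs size_sign_pattern; lia.
  by rewrite take_oversize ?Hsz.
- rewrite iterSr cancel1_sorted; first exact: (IH 0).
  by rewrite Hs /sign_pattern /= cats0 sorted_signs.
- have Hsz : x + y <= size s by rewrite -(size_map snd) Hs size_sign_pattern; lia.
  rewrite iterSr (cancel1_pattern Hs) (IH z) //.
  + by rewrite take_size_cat // size_take_min; apply/minn_idPl.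
  + rewrite map_cat map_take map_drop Hs /sign_pattern catA (addnC (x + y) 2) -drop_drop.
    by rewrite take_size_cat ?drop_size_cat ?size_cat ?size_nseq // catA.
Qed.

Definition signed_cells (i : nat) (T : tableau) : seq (nat * nat) :=
  [seq c <- cells T | (entry T c == i) || (entry T c == i.+1)].

Definition set_entry (T : tableau) (kc : nat * nat) (v : nat) : tableau :=
  set_nth [::] T kc.1 (set_nth 0 (nth [::] T kc.1) kc.2 v).

Lemma signature_cells i T :
  map (nth (0, 0) (cells T) \o fst) (signature i (word T)) = signed_cells i T /\
  map snd (signature i (word T)) = map (fun c => entry T c == i) (signed_cells i T).
Proof.
set n := size (cells T).
have Hword q : q < n -> nth 0 (word T) q = entry T (nth (0, 0) (cells T) q).
  by move=> Hq; rewrite (nth_map (0, 0)).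
have Hsig : signature i (word T) = [seq (q, nth 0 (word T) q == i) | q <- iota 0 n
              & (nth 0 (word T) q == i) || (nth 0 (word T) q == i.+1)].
  by rewrite /signature size_map.
have Hcells : signed_cells i T = [seq nth (0, 0) (cells T) q | q <- iota 0 n
              & (nth 0 (word T) q == i) || (nth 0 (word T) q == i.+1)].
  have Hall : cells T = map (nth (0, 0) (cells T)) (iota 0 n).
    by rewrite -/(mkseq _ _) mkseq_nth.
  rewrite /signed_cells {1}Hall filter_map; congr map.
  by apply: eq_in_filter => q; rewrite mem_iota /= => Hq; rewrite Hword.
rewrite Hsig Hcells -!map_comp; split; first exact: eq_map.
apply/eq_in_map => q; rewrite mem_filter mem_iota /= => /andP [_ Hq].
by rewrite Hword.
Qed.

Lemma e_op_pattern i T x y z :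
  map (fun c => entry T c == i) (signed_cells i T) = sign_pattern x y z ->
  e_op i T = if x is x'.+1 then Some (set_entry T (nth (0, 0) (signed_cells i T) x') i)
             else None.
Proof.
move=> Hpat; have [Hpos Hsnd] := signature_cells i T.
rewrite Hpat in Hsnd.
set sig := signature i (word T) in Hpos Hsnd *.
have Hsz : size sig = x + y + 2 * z by rewrite -(size_map snd) Hsnd size_sign_pattern.
have Hminus : [seq q.1 | q <- reduced sig & ~~ q.2] = map fst (take x sig).
  rewrite (reduced_pattern Hsnd) takeD filter_cat.
  have [Hm Hp] : map snd (take x sig) = nseq x false /\
                 map snd (take y (drop x sig)) = nseq y true.
    rewrite !map_take map_drop Hsnd /sign_pattern take_size_cat ?size_nseq //.
    by rewrite drop_size_cat ?size_nseq // take_size_cat ?size_nseq.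
  rewrite (eq_in_filter (a2 := predT)); last first.
    by move=> p Hp'; have := map_f snd Hp'; rewrite Hm => /nseqP [->].
  rewrite filter_predT (eq_in_filter (a2 := pred0)) ?filter_pred0 ?cats0 //.
  by move=> p Hp'; have := map_f snd Hp'; rewrite Hp => /nseqP [->].
rewrite /e_op -/sig Hminus.
case: x Hpat Hsnd Hsz Hminus => [|x] _ _ Hsz _; first by rewrite take0.
have Htake : size (take x.+1 sig) = x.+1 by rewrite size_takel //; lia.
case Em : (map fst (take x.+1 sig)) => [|q0 qs].
  by move: (congr1 size Em); rewrite size_map Htake.
rewrite -Em -nth_last size_map Htake /= (nth_map (0, false)) ?Htake // nth_take //.
by rewrite -Hpos (nth_map (0, false)) ?Hsz; last lia.
Qed.

Lemma size_row_nth (T : tableau) k : size (nth [::] T k) = nth 0 (map size T) k.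
Proof. by elim: T k => [|x T IH] [|k] //=. Qed.

Lemma size_row_shape (T T' : tableau) k : map size T = map size T' ->
  size (nth [::] T k) = size (nth [::] T' k).
Proof. by move=> H; rewrite !size_row_nth H. Qed.

Lemma tableau_ext (T T' : tableau) : map size T = map size T' ->
  (forall k c, k < size T -> c < size (nth [::] T k) -> entry T (k, c) = entry T' (k, c)) ->
  T = T'.
Proof.
move=> Hs He; have Hsz : size T = size T' by rewrite -(size_map size T) Hs size_map.
apply: (eq_from_nth (x0 := [::])) => // k Hk.
apply: (eq_from_nth (x0 := 0)); first exact: size_row_shape.
by move=> c; apply: He.
Qed.

Lemma set_entry_shape T kc v : kc.1 < size T -> kc.2 < size (nth [::] T kc.1) ->
  map size (set_entry T kc v) = map size T.
Proof.
case: kc => k c /= Hk Hc.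
have Hs : size (set_entry T (k, c) v) = size T by rewrite size_set_nth; apply/maxn_idPr.
apply: (eq_from_nth (x0 := 0)); first by rewrite !size_map Hs.
move=> q; rewrite size_map Hs => Hq.
rewrite !(nth_map [::]) ?Hs // nth_set_nth /=.
by case: eqP => // ->; rewrite size_set_nth; apply/maxn_idPr.
Qed.

Lemma entry_set_entry T kc v k c : kc.1 < size T ->
  entry (set_entry T kc v) (k, c) = if (k, c) == kc then v else entry T (k, c).
Proof.
case: kc => k0 c0 /= Hk; rewrite /entry /set_entry /= nth_set_nth /= xpair_eqE.
by case: (k =P k0) => [->|] //=; rewrite nth_set_nth /=; case: eqP.
Qed.

Definition column_cells (T : tableau) (col : nat) : seq (nat * nat) :=
  [seq (k, col) | k <- iota 0 (size T) & col < size (nth [::] T k)].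

Lemma cellsE T : cells T = flatten [seq column_cells T col | col <- rev (iota 0 (ncols T))].
Proof. by []. Qed.

Lemma cells_shape T T' : map size T = map size T' -> cells T = cells T'.
Proof.
move=> H; rewrite !cellsE /ncols H.
have Hs : size T = size T' by rewrite -(size_map size T) H size_map.
congr flatten; apply: eq_map => col; rewrite /column_cells Hs.
by congr map; apply: eq_filter => k; rewrite (size_row_shape _ H).
Qed.

Lemma mem_column_cells T cols kc : kc \in flatten [seq column_cells T col | col <- cols] ->
  [/\ kc.2 \in cols, kc.1 < size T & kc.2 < size (nth [::] T kc.1)].
Proof.
case/flatten_mapP => col Hcol /mapP [k]; rewrite mem_filter mem_iota => /andP [H1 H2] ->.
by split.
Qed.

Lemma size_row_ncols T k : size (nth [::] T k) <= ncols T.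
Proof.
rewrite /ncols; elim: T k => [|x T IH] [|k] //=; first exact: leq_maxl.
exact: leq_trans (IH k) (leq_maxr _ _).
Qed.

Lemma mem_cells T kc : kc \in cells T -> kc.1 < size T /\ kc.2 < size (nth [::] T kc.1).
Proof. by rewrite cellsE => /mem_column_cells []. Qed.

Lemma cells_mem T k c : k < size T -> c < size (nth [::] T k) -> (k, c) \in cells T.
Proof.
move=> Hk Hc; rewrite cellsE; apply/flatten_mapP; exists c.
  by rewrite mem_rev mem_iota /= add0n (leq_trans Hc (size_row_ncols _ _)).
by apply/mapP; exists k; rewrite // mem_filter mem_iota Hc.
Qed.

Lemma cells_uniq T : uniq (cells T).
Proof.
rewrite cellsE; have : uniq (rev (iota 0 (ncols T))) by rewrite rev_uniq iota_uniq.
elim: (rev _) => [|col cols IH] //= /andP [Hn Hu]; rewrite cat_uniq IH ?andbT //.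
apply/andP; split.
  by rewrite map_inj_uniq ?filter_uniq ?iota_uniq // => x y [].
apply/hasP => -[kc /mem_column_cells [H1 _ _] /mapP [k _ Ekc]].
by move: Hn; rewrite Ekc /= in H1; rewrite H1.
Qed.

Lemma cells_split T C : C <= ncols T ->
  cells T = flatten [seq column_cells T col | col <- rev (iota C (ncols T - C))]
            ++ flatten [seq column_cells T col | col <- rev (iota 0 C)].
Proof.
move=> HC; rewrite cellsE -(subnKC HC) iotaD rev_cat map_cat flatten_cat add0n.
by rewrite addKn.
Qed.

Lemma sorted_nth_le_count (s : seq nat) c v : sorted leq s -> c < size s ->
  (nth 0 s c <= v) = (c < count (fun x => x <= v) s).
Proof.
move=> Hs Hc.
have Hmono c1 c2 : c1 <= c2 < size s -> nth 0 s c1 <= nth 0 s c2.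
  by move=> /andP [H12 H2]; apply: (sorted_leq_nth leq_trans leqnn 0 Hs); rewrite ?inE //; lia.
rewrite -{2}(cat_take_drop c.+1 s) count_cat.
have Htake : size (take c.+1 s) = c.+1 by rewrite size_takel.
case: (leqP (nth 0 s c) v) => Hv.
- have : all (fun x => x <= v) (take c.+1 s).
    apply/allP => u /(nthP 0) [q Hq <-]; rewrite Htake in Hq.
    by rewrite nth_take // (leq_trans _ Hv) // Hmono //; lia.
  by rewrite all_count Htake => /eqP ->; rewrite leq_addr.
- have -> : count (fun x => x <= v) (drop c.+1 s) = 0.
    apply/eqP; rewrite -leqn0 leqNgt -has_count; apply/hasP => -[u /(nthP 0) [q Hq <-]].
    rewrite size_drop in Hq; rewrite nth_drop /= => Hle.
    have Hq' : q < size s - c.+1 := Hq.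
    have Hcq : c <= c.+1 + q < size s by lia.
    by have := leq_trans (Hmono c (c.+1 + q) Hcq) Hle; rewrite leqNgt Hv.
  have Hf : (nth 0 s c <= v) = false by rewrite leqNgt Hv.
  rewrite addn0 (take_nth 0) // -cats1 count_cat /= Hf !addn0.
  apply/esym/negbTE; rewrite -leqNgt.
  by apply: leq_trans (count_size _ _) _; rewrite size_takel // ltnW.
Qed.

Section Semistandard.
Variables (r : nat) (sh : nat -> nat) (b : tableau).
Hypothesis Hb : is_SSYT r sh b.
Hypothesis Hsh : forall p, 1 <= p < r -> sh p.+1 <= sh p.

Lemma ssyt_size : size b = r.
Proof. by case: Hb. Qed.

Lemma ssyt_row_size k : k < r -> size (nth [::] b k) = sh k.+1.
Proof. by case: Hb => _ H _ _ _ Hk; apply: (H k.+1). Qed.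

Lemma ssyt_entry_range k c : k < r -> c < size (nth [::] b k) ->
  1 <= entry b (k, c) <= r.+1.
Proof. by case: Hb => _ _ H _ _ Hk Hc; apply: (allP (H k.+1 Hk)); apply: mem_nth. Qed.

Lemma ssyt_row_sorted k : k < r -> sorted leq (nth [::] b k).
Proof. by case: Hb => _ _ _ H _ Hk; apply: (H k.+1). Qed.

Lemma ssyt_col_strict k c : k.+1 < r -> c < size (nth [::] b k.+1) ->
  entry b (k, c) < entry b (k.+1, c).
Proof. by case: Hb => _ _ _ _ H Hk Hc; apply: (H k.+1 c). Qed.

Lemma ssyt_row_size_le k k' : k <= k' -> k' < r ->
  size (nth [::] b k') <= size (nth [::] b k).
Proof.
move=> Hkk'; rewrite -(subnK Hkk'); elim: (k' - k) => [|d IH] Hd //.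
apply: leq_trans (IH (ltnW Hd)); rewrite addSn in Hd *.
by rewrite !ssyt_row_size 1?Hsh //; lia.
Qed.

Lemma ssyt_col_gap k k' c : k <= k' -> k' < r -> c < size (nth [::] b k') ->
  entry b (k, c) + (k' - k) <= entry b (k', c).
Proof.
move=> Hkk'; rewrite -(subnK Hkk'); elim: (k' - k) => [|d IH] Hd Hc.
  by rewrite add0n subnn addn0.
rewrite addSn in Hd Hc *.
have Hc' : c < size (nth [::] b (d + k)).
  exact: leq_trans Hc (ssyt_row_size_le (leqnSn _) Hd).
by have := IH (ltnW Hd) Hc'; have := ssyt_col_strict Hd Hc; lia.
Qed.

Lemma ssyt_row_mem k x : k < r -> x \in nth [::] b k -> k.+1 <= x <= r.+1.
Proof.
move=> Hk /(nthP 0) [c Hc <-].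
have Hc0 : c < size (nth [::] b 0) by apply: leq_trans Hc (ssyt_row_size_le _ _).
have := ssyt_col_gap (leq0n k) Hk Hc; have := ssyt_entry_range Hk Hc.
have := ssyt_entry_range (leq_ltn_trans (leq0n _) Hk) Hc0; rewrite /entry /=; lia.
Qed.

End Semistandard.

Lemma ell_step (m : seq nat) p : p <= size m -> ell m p.+1 <= ell m p.
Proof.
move=> Hp; rewrite /ell; case: p Hp => [|p] Hp.
- by rewrite (@big_ltn _ _ _ 0) //; lia.
- by rewrite (@big_ltn _ _ _ p.+1); lia.
Qed.

Definition relabel (j t p x : nat) : nat :=
  if x <= j then p else if x == j.+1 then maxn p t.+1 else x.

(* The tableau reached after the letters of the long word preceding letter t
   of block j (see the header). *)
Definition stage (b : tableau) (j t : nat) : tableau :=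
  [seq map (relabel j t k.+1) (nth [::] b k) | k <- iota 0 (size b)].

Lemma size_stage b j t : size (stage b j t) = size b.
Proof. by rewrite size_map size_iota. Qed.

Lemma nth_stage b j t k : k < size b ->
  nth [::] (stage b j t) k = map (relabel j t k.+1) (nth [::] b k).
Proof. by move=> Hk; rewrite (nth_map 0) ?size_iota // nth_iota. Qed.

Lemma shape_stage b j t : map size (stage b j t) = map size b.
Proof.
apply: (eq_from_nth (x0 := 0)); first by rewrite !size_map size_iota.
move=> k; rewrite size_map size_stage => Hk.
by rewrite !(nth_map [::]) ?size_stage // nth_stage // size_map.
Qed.

Lemma entry_stage b j t k c : k < size b -> c < size (nth [::] b k) ->
  entry (stage b j t) (k, c) = relabel j t k.+1 (entry b (k, c)).
Proof. by move=> Hk Hc; rewrite /entry /= nth_stage // (nth_map 0). Qed.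

Lemma map_const_in (A : eqType) (B : Type) (g : A -> B) v (s : seq A) :
  {in s, forall x, g x = v} -> map g s = nseq (size s) v.
Proof.
elim: s => [|x s IH] //= H; rewrite H ?mem_head // IH // => y Hy.
by apply: H; rewrite inE Hy orbT.
Qed.

Lemma filter_iota_pair a n (cnd : bool) : a < n -> (cnd -> a.+1 < n) ->
  filter (fun k => (k == a) || ((k == a.+1) && cnd)) (iota 0 n)
  = a :: (if cnd then [:: a.+1] else [::]).
Proof.
move=> Han Hc.
have Hnil s l : (forall k, s <= k < s + l -> (k == a) || ((k == a.+1) && cnd) = false) ->
    filter (fun k => (k == a) || ((k == a.+1) && cnd)) (iota s l) = [::].
  move=> H; rewrite (eq_in_filter (a2 := pred0)) ?filter_pred0 // => k.
  by rewrite mem_iota; apply: H.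
rewrite -(subnKC (ltnW Han)) iotaD filter_cat Hnil; last by move=> k; lia.
rewrite add0n -[n - a](@prednK _) /=; last lia.
rewrite eqxx /=; case: cnd Hc Hnil => Hc Hnil.
- rewrite -[(n - a).-1](@prednK _) /=; last by have := Hc isT; lia.
  by rewrite eqxx orbT Hnil //; move=> k; lia.
- by rewrite Hnil //; move=> k; lia.
Qed.

(* Columns col < C contribute '+' followed, when col < C1, by '-'; read from
   right to left this is +^(C-C1) (+-)^C1. *)
Lemma flatten_columns_pattern C C1 : C1 <= C ->
  flatten [seq true :: (if col < C1 then [:: false] else [::]) | col <- rev (iota 0 C)]
  = nseq (C - C1) true ++ flatten (nseq C1 [:: true; false]).
Proof.
move=> HC; rewrite -(subnKC HC) iotaD rev_cat map_cat flatten_cat addKn add0n.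
rewrite (map_const_in (v := [:: true])); last first.
  by move=> col; rewrite mem_rev mem_iota => /andP [Hc _]; rewrite ltnNge Hc.
rewrite (map_const_in (v := [:: true; false])); last first.
  by move=> col; rewrite mem_rev mem_iota => /andP [_ Hc]; rewrite Hc.
rewrite !size_rev !size_iota; congr (_ ++ _).
by elim: (C - C1) => //= n ->.
Qed.

Section Step.
Variables (r : nat) (sh : nat -> nat) (b : tableau) (j t : nat).
Hypothesis Hb : is_SSYT r sh b.
Hypothesis Hsh : forall p, 1 <= p < r -> sh p.+1 <= sh p.
Hypothesis Ht : 1 <= t.
Hypothesis Htj : t <= j.
Hypothesis Hjr : j <= r.

Let Hsize : size b = r := ssyt_size Hb.

(* Entries <= j of row t, and entries <= j+1 of row t+1, fill an initial
   segment of these rows; top_low and bot_low are its lengths. *)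
Let top_low := count (fun x => x <= j) (nth [::] b t.-1).
Let bot_low := count (fun x => x <= j.+1) (nth [::] b t).

Lemma top_lowP col : col < size (nth [::] b t.-1) ->
  (entry b (t.-1, col) <= j) = (col < top_low).
Proof. by move=> Hc; apply: sorted_nth_le_count => //=; apply: (ssyt_row_sorted Hb); lia. Qed.

Lemma bot_lowP col : col < size (nth [::] b t) ->
  (entry b (t, col) <= j.+1) = (col < bot_low).
Proof.
move=> Hc; have Htr : t < r.
  by case: (ltnP t r) => // H; move: Hc; rewrite nth_default // Hsize.
exact: (sorted_nth_le_count _ (ssyt_row_sorted Hb Htr) Hc).
Qed.

Lemma bot_low_row : 0 < bot_low -> t < r.
Proof. by case: (ltnP t r) => // H; rewrite /bot_low nth_default // Hsize. Qed.

Lemma bot_high col : t < r -> col < size (nth [::] b t) -> top_low <= col ->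
  j.+1 < entry b (t, col).
Proof.
move=> Htr Hc HC.
have Hc' : col < size (nth [::] b t.-1).
  by apply: leq_trans Hc (ssyt_row_size_le Hb Hsh _ _); lia.
have := top_lowP Hc'; have := @ssyt_col_strict _ _ _ Hb t.-1 col.
have Hlow : (col < top_low) = false by rewrite ltnNge HC.
by rewrite prednK // Hlow => /(_ Htr Hc); lia.
Qed.

Lemma bot_low_le_top_low : bot_low <= top_low.
Proof.
case E : bot_low => [|c1] //; have Htr : t < r by apply: bot_low_row; rewrite E.
have Hc : c1 < size (nth [::] b t) by rewrite -E count_size.
have := bot_lowP Hc; rewrite E ltnSn => H.
by case: (leqP top_low c1) => // HC; have := bot_high Htr Hc HC; lia.
Qed.

(* The boxes of rows 1..t of b holding j+1: they are exactly the '-' of the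
   t-signature of stage b j t that the maximal power of e~_t lowers. *)
Definition raised_box (c : nat * nat) : bool := (c.1 < t) && (entry b c == j.+1).

Let raised := [seq c <- cells b | raised_box c].
Let nraised := size raised.

Lemma raised_valid c : c \in raised -> c.1 < r /\ c.2 < size (nth [::] b c.1).
Proof. by rewrite mem_filter => /andP [_ /mem_cells]; rewrite Hsize. Qed.

Lemma raised_col c : c \in raised -> top_low <= c.2.
Proof.
case: c => k col Hc; have [/= H1 H2] := raised_valid Hc.
move: Hc; rewrite mem_filter /raised_box /= => /andP [/andP [Hk /eqP Hx] _].
case: (leqP top_low col) => // Hlt.
have Hc' : col < size (nth [::] b t.-1) by apply: leq_trans Hlt (count_size _ _).
have Hkt : k <= t.-1 by lia.
have Htr : t.-1 < r by lia.
have := ssyt_col_gap Hb Hsh Hkt Htr Hc'.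
by have := top_lowP Hc'; rewrite Hlt Hx; lia.
Qed.

Lemma raised_not_left k col : k < r -> col < size (nth [::] b k) -> col < top_low ->
  raised_box (k, col) = false.
Proof.
move=> Hk Hc HC; apply/negbTE/negP => Hp.
have : (k, col) \in raised by rewrite mem_filter Hp cells_mem ?Hsize.
by move/raised_col => /=; lia.
Qed.

(* lowering n: stage b j t after n applications of e~_t, which turned the
   last n raised boxes (in reading order) from t+1 into t. *)
Fixpoint lowering (n : nat) : tableau :=
  if n is n'.+1 then set_entry (lowering n') (nth (0, 0) raised (nraised - n)) t
  else stage b j t.

Lemma lowering_shape n : n <= nraised -> map size (lowering n) = map size b.
Proof.
elim: n => [|n IH] Hn /=; first exact: shape_stage.
have Hlt : nraised - n.+1 < size raised by rewrite -/nraised; lia.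
have [Hv1 Hv2] := raised_valid (mem_nth (0, 0) Hlt).
have IHn := IH (ltnW Hn).
rewrite set_entry_shape // ?(size_row_shape _ IHn) //.
by rewrite -(size_map size) IHn size_map Hsize.
Qed.

Lemma entry_lowering n k c : n <= nraised -> k < r -> c < size (nth [::] b k) ->
  entry (lowering n) (k, c) =
  if (k, c) \in drop (nraised - n) raised then t else relabel j t k.+1 (entry b (k, c)).
Proof.
elim: n => [|n IH] Hn Hk Hc /=.
  by rewrite subn0 drop_size entry_stage ?Hsize.
have Hlt : nraised - n.+1 < size raised by rewrite -/nraised; lia.
have [Hv1 _] := raised_valid (mem_nth (0, 0) Hlt).
have Hsz : size (lowering n) = size b.
  by rewrite -(size_map size) lowering_shape ?size_map //; lia.
rewrite entry_set_entry ?Hsz ?Hsize // IH //; last lia.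
rewrite (drop_nth (0, 0) Hlt) in_cons.
have -> : (nraised - n.+1).+1 = nraised - n by lia.
by case: eqP.
Qed.

Lemma signed_right n k col : n <= nraised -> k < r -> col < size (nth [::] b k) ->
  top_low <= col ->
  (entry (lowering n) (k, col) == t) || (entry (lowering n) (k, col) == t.+1) =
  raised_box (k, col).
Proof.
move=> Hn Hk Hc HC; rewrite entry_lowering //; case: ifP => Hin.
  by move: (mem_drop Hin); rewrite mem_filter => /andP [-> _]; rewrite eqxx.
rewrite /raised_box /=; set x := entry b (k, col).
have Htop : k = t.-1 -> j < x.
  by move=> Ek; rewrite Ek in Hc; have := top_lowP Hc; rewrite /x Ek; lia.
have Hbot : k = t -> j.+1 < x by move=> Ek; rewrite Ek in Hc Hk; rewrite /x Ek; apply: bot_high.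
by rewrite /relabel; case: ifP => H1; [|case: ifP => H2]; lia.
Qed.

Lemma signed_left_box n k col : n <= nraised -> col < top_low -> k < r ->
  col < size (nth [::] b k) ->
  (entry (lowering n) (k, col) == t) || (entry (lowering n) (k, col) == t.+1) =
  (k == t.-1) || ((k == t) && (col < bot_low)).
Proof.
move=> Hn HC Hk Hc; rewrite entry_lowering //.
have -> : ((k, col) \in drop (nraised - n) raised) = false.
  by apply/negbTE/negP => /mem_drop; rewrite mem_filter raised_not_left.
set x := entry b (k, col).
have Hge : k.+1 <= x by have /andP [] := ssyt_row_mem Hb Hsh Hk (mem_nth 0 Hc).
have Htop : k = t.-1 -> x <= j.
  by move=> Ek; rewrite Ek in Hc; rewrite /x Ek top_lowP.
have Hbot : k = t -> (x <= j.+1) = (col < bot_low).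
  by move=> Ek; rewrite Ek in Hc Hk; rewrite /x Ek; apply: bot_lowP.
have Habove : k < t.-1 -> x < j.
  move=> Hkt; have Hc' : col < size (nth [::] b t.-1).
    exact: leq_trans HC (count_size _ _).
  have Hkt' : k <= t.-1 by lia.
  have Htr : t.-1 < r by lia.
  have Hj : entry b (t.-1, col) <= j by rewrite top_lowP.
  by have := ssyt_col_gap Hb Hsh Hkt' Htr Hc'; rewrite /x; lia.
by rewrite /relabel; case: ifP => H1; [|case: ifP => H2]; lia.
Qed.

Lemma signed_left n col : n <= nraised -> col < top_low ->
  [seq c <- column_cells b col |
     (entry (lowering n) c == t) || (entry (lowering n) c == t.+1)]
  = (t.-1, col) :: (if col < bot_low then [:: (t, col)] else [::]).
Proof.
move=> Hn HC; have Htop := count_size (fun x => x <= j) (nth [::] b t.-1).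
have Hbot := count_size (fun x => x <= j.+1) (nth [::] b t).
rewrite /column_cells filter_map -filter_predI Hsize.
rewrite (eq_in_filter (a2 := fun k => (k == t.-1) || ((k == t.-1.+1) && (col < bot_low)))).
  rewrite filter_iota_pair /= ?prednK //; [by case: ifP | lia |].
  by move=> H; apply: bot_low_row; lia.
move=> k /=; rewrite mem_iota prednK // => Hk.
case: (ltnP col (size (nth [::] b k))) => Hc; last first.
  rewrite andbF; case: (eqVneq k t.-1) => [Ek|_]; first by subst k; lia.
  by case: (eqVneq k t) => [Ek|] //=; subst k; lia.
by rewrite andbT signed_left_box.
Qed.

Let left_part :=
  flatten [seq (t.-1, col) :: (if col < bot_low then [:: (t, col)] else [::])
          | col <- rev (iota 0 top_low)].

Lemma signed_cells_lowering n : n <= nraised ->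
  signed_cells t (lowering n) = raised ++ left_part.
Proof.
move=> Hn; have Htop : top_low <= ncols b.
  exact: leq_trans (count_size _ _) (size_row_ncols _ _).
rewrite /signed_cells (cells_shape (lowering_shape Hn)) (cells_split Htop) filter_cat.
congr (_ ++ _).
- rewrite /raised (cells_split Htop) filter_cat.
  rewrite [X in _ ++ X](eq_in_filter (a2 := pred0)) ?filter_pred0 ?cats0; last first.
    case=> k col /mem_column_cells [/= H1 H2 H3].
    move: H1 H2; rewrite mem_rev mem_iota Hsize /= => H1 H2.
    by apply: raised_not_left => //; lia.
  apply: eq_in_filter => -[k col] /mem_column_cells [/= H1 H2 H3].
  move: H1 H2; rewrite mem_rev mem_iota Hsize => /andP [H1 _] H2.
  by rewrite signed_right.
- rewrite filter_flatten -map_comp; congr flatten; apply/eq_in_map => col.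
  by rewrite mem_rev mem_iota /= => Hc; apply: signed_left.
Qed.

Lemma signs_raised n : n <= nraised ->
  map (fun c => entry (lowering n) c == t) raised = nseq (nraised - n) false ++ nseq n true.
Proof.
move=> Hn; rewrite -{1}(cat_take_drop (nraised - n) raised) map_cat.
have Hdis : ~~ has (mem (take (nraised - n) raised)) (drop (nraised - n) raised).
  have : uniq raised := filter_uniq _ (cells_uniq b).
  by rewrite -{1}(cat_take_drop (nraised - n) raised) cat_uniq => /and3P [].
have Hraised c : c \in raised -> [/\ c.1 < r, c.2 < size (nth [::] b c.1) & entry b c = j.+1].
  move=> Hc; have [H1 H2] := raised_valid Hc.
  by move: Hc; rewrite mem_filter /raised_box => /andP [/andP [_ /eqP ->] _].
congr (_ ++ _).
- rewrite (map_const_in (v := false)).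
    by rewrite size_takel // leq_subr.
  case=> k col Hin; have [/= Hk Hc Hx] := Hraised _ (mem_take Hin).
  have Hkt : k < t by move: (mem_take Hin); rewrite mem_filter /raised_box => /andP [/andP []].
  rewrite entry_lowering // Hx ifF; last first.
    by apply/negbTE/negP => Hd; apply: (negP Hdis); apply/hasP; exists (k, col).
  by rewrite /relabel ltnn eqxx; lia.
- rewrite (map_const_in (v := true)); first by rewrite size_drop -/nraised; congr nseq; lia.
  case=> k col Hin; have [/= Hk Hc _] := Hraised _ (mem_drop Hin).
  by rewrite entry_lowering // Hin eqxx.
Qed.

Lemma signs_left_part n : n <= nraised ->
  map (fun c => entry (lowering n) c == t) left_part
  = nseq (top_low - bot_low) true ++ flatten (nseq bot_low [:: true; false]).
Proof.
move=> Hn; rewrite -(flatten_columns_pattern bot_low_le_top_low) map_flatten -map_comp.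
congr flatten; apply/eq_in_map => col; rewrite mem_rev mem_iota /= => Hc.
have Hc1 : col < size (nth [::] b t.-1) by apply: leq_trans Hc (count_size _ _).
rewrite /= entry_lowering //; last lia.
rewrite ifF; last by apply/negbTE/negP => /mem_drop; rewrite mem_filter raised_not_left //; lia.
rewrite /relabel top_lowP // Hc prednK // eqxx /=; case: ifP => // Hbot.
have Htr : t < r by apply: bot_low_row; lia.
have Hc2 : col < size (nth [::] b t) by apply: leq_trans Hbot (count_size _ _).
rewrite /= entry_lowering // ifF; last first.
  by apply/negbTE/negP => /mem_drop; rewrite mem_filter raised_not_left.
have := bot_lowP Hc2; rewrite Hbot /relabel.
by case: ifP => H1; [|case: ifP => H2]; move=> H; congr [:: _; _]; lia.
Qed.

Lemma signs_lowering n : n <= nraised ->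
  map (fun c => entry (lowering n) c == t) (signed_cells t (lowering n))
  = sign_pattern (nraised - n) (n + (top_low - bot_low)) bot_low.
Proof.
move=> Hn; rewrite signed_cells_lowering // map_cat signs_raised // signs_left_part //.
by rewrite /sign_pattern nseqD -!catA.
Qed.

Lemma e_op_lowering n : n <= nraised ->
  e_op t (lowering n) = if n < nraised then Some (lowering n.+1) else None.
Proof.
move=> Hn; rewrite (e_op_pattern (signs_lowering Hn)).
case E : (nraised - n) => [|x]; first by rewrite ifF //; lia.
rewrite ifT; last lia.
rewrite signed_cells_lowering // nth_cat ifT; last lia.
by rewrite /= (_ : nraised - n.+1 = x) //; lia.
Qed.

Lemma e_pow_lowering n : n <= nraised -> e_pow t n (stage b j t) = Some (lowering n).
Proof.
elim: n => [|n IH] Hn //; rewrite /e_pow iterS -/(e_pow t n _) IH; last lia.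
by rewrite /= e_op_lowering ?ifT //; lia.
Qed.

Lemma lowering_final : lowering nraised = stage b j t.-1.
Proof.
apply: tableau_ext; first by rewrite lowering_shape // shape_stage.
move=> k c; rewrite -(size_map size) lowering_shape // size_map.
rewrite (size_row_shape _ (lowering_shape (leqnn _))) Hsize => Hk Hc.
rewrite entry_lowering // subnn drop0 entry_stage ?Hsize //.
rewrite mem_filter cells_mem ?Hsize // andbT /raised_box /=.
by rewrite /relabel; do !(case: ifP => ?); lia.
Qed.

Lemma e_pow_stage : exists D, e_pow t D (stage b j t) = Some (stage b j t.-1) /\
                              e_pow t D.+1 (stage b j t) = None.
Proof.
exists nraised; rewrite e_pow_lowering // lowering_final; split => //.
by rewrite /e_pow iterS -/(e_pow t nraised _) e_pow_lowering //= e_op_lowering // ltnn.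
Qed.

End Step.

(* tri j = j(j-1)/2 is the length of the blocks of the long word before block j. *)
Definition tri (j : nat) : nat := j * j.-1 %/ 2.

Lemma triS j : tri j.+1 = tri j + j.
Proof.
rewrite /tri /=; case: j => [|j] //=.
have -> : j.+2 * j.+1 = j.+1 * 2 + j.+1 * j by nia.
by rewrite divnMDl //; lia.
Qed.

Lemma tri_mono a c : a <= c -> tri a <= tri c.
Proof.
move=> H; rewrite -(subnKC H); elim: (c - a) => [|d IH]; first by rewrite addn0.
by rewrite addnS triS; lia.
Qed.

Lemma long_wordS r : long_word r.+1 = long_word r ++ rev (iota 1 r.+1).
Proof.
have Hiota : iota 1 r.+1 = iota 1 r ++ [:: r.+1] by have := iotaD 1 r 1; rewrite addn1 add1n.
by rewrite /long_word {1}Hiota map_cat flatten_cat /= cats0.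
Qed.

Lemma size_long_word r : size (long_word r) = tri r.+1.
Proof.
by elim: r => [|r IH] //; rewrite long_wordS size_cat IH size_rev size_iota [tri r.+2]triS.
Qed.

Lemma Nlen_tri r : Nlen r = tri r.+1.
Proof. by rewrite /Nlen /tri /= mulnC. Qed.

Lemma nth_long_word_prefix j r k : j <= r -> k < size (long_word j) ->
  nth 0 (long_word r) k = nth 0 (long_word j) k.
Proof.
move=> H; rewrite -(subnKC H); elim: (r - j) => [|d IH] Hk; first by rewrite addn0.
rewrite addnS long_wordS nth_cat ifT ?IH // size_long_word.
by rewrite size_long_word in Hk; apply: leq_trans Hk (tri_mono _); lia.
Qed.

Lemma nth_long_word r j t : 1 <= t -> t <= j -> j <= r ->
  nth 0 (long_word r) (tri j + (j - t)) = t.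
Proof.
move=> Ht Htj Hjr; have Hj : 0 < j by lia.
rewrite (@nth_long_word_prefix j) //; last by rewrite size_long_word triS; lia.
rewrite -(prednK Hj) long_wordS nth_cat size_long_word prednK // ltnNge leq_addr /= addKn.
by rewrite nth_rev size_iota; [rewrite nth_iota|]; lia.
Qed.

Lemma apply_e_take (ws as_ : seq nat) k T : k < size ws -> k < size as_ ->
  apply_e (take k.+1 ws) (take k.+1 as_) T =
  obind (e_pow (nth 0 ws k) (nth 0 as_ k)) (apply_e (take k ws) (take k as_) T).
Proof.
elim: ws as_ k T => [|i ws IH] [|a as_] [|k] T //= Hk Ha.
- by rewrite take0 /=; case: (e_pow i a T).
- by case: (e_pow i a T) => [T'|] //=; apply: IH.
Qed.

Lemma e_pow_none_mono i n n' T : e_pow i n T = None -> n <= n' -> e_pow i n' T = None.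
Proof.
move=> H Hn; rewrite -(subnKC Hn); elim: (n' - n) => [|d IH]; first by rewrite addn0.
by rewrite addnS /e_pow iterS -/(e_pow i (n + d) T) IH.
Qed.

Section Path.
Variables (r : nat) (sh : nat -> nat) (b : tableau) (a : seq nat).
Hypothesis Hb : is_SSYT r sh b.
Hypothesis Hsh : forall p, 1 <= p < r -> sh p.+1 <= sh p.
Hypothesis Ha : is_BZL_path r b a.

Let Hsize : size b = r := ssyt_size Hb.

(* Entries of row p are at least p, so the first stage is b itself. *)
Lemma stage_start : stage b 1 1 = b.
Proof.
rewrite /stage -{3}(mkseq_nth [::] b) /mkseq; apply/eq_in_map => k.
rewrite mem_iota Hsize /= => Hk; rewrite -{2}(map_id (nth [::] b k)); apply/eq_in_map => x Hx.
by have := ssyt_row_mem Hb Hsh Hk Hx; rewrite /relabel; do !(case: ifP => ?); lia.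
Qed.

Lemma stage_next_block j : stage b j 0 = stage b j.+1 j.+1.
Proof.
rewrite /stage; apply/eq_in_map => k; rewrite mem_iota Hsize /= => Hk.
apply/eq_in_map => x Hx.
by have := ssyt_row_mem Hb Hsh Hk Hx; rewrite /relabel; do !(case: ifP => ?); lia.
Qed.

(* The BZL path exponent at a letter t is the maximal power of e~_t, which
   lowers stage b j t to stage b j (t-1). *)
Lemma bzl_step n j t : 1 <= t -> t <= j -> j <= r -> n < Nlen r ->
  nth 0 (long_word r) n = t ->
  apply_e (take n (long_word r)) (take n a) b = Some (stage b j t) ->
  apply_e (take n.+1 (long_word r)) (take n.+1 a) b = Some (stage b j t.-1).
Proof.
move=> Ht Htj Hjr Hn Hletter Hpre; case: Ha => Hsa HBZL.
have [D [HD HD1]] := e_pow_stage Hb Hsh Ht Htj Hjr.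
have [Hpos Hmax] := HBZL n Hn; rewrite /= Hpre Hletter /= in Hpos Hmax.
have HaD : nth 0 a n = D.
  apply/eqP; rewrite eqn_leq Hmax ?HD // andbT leqNgt; apply/negP => Hlt.
  by apply: Hpos; apply: e_pow_none_mono HD1 Hlt.
rewrite apply_e_take; first by rewrite Hpre Hletter HaD /= HD.
  by rewrite size_long_word -Nlen_tri.
by rewrite Hsa.
Qed.

Lemma bzl_prefix_stage j d : 1 <= j -> j <= r -> d < j ->
  apply_e (take (tri j + d) (long_word r)) (take (tri j + d) a) b = Some (stage b j (j - d)).
Proof.
have HN j' : j' <= r -> tri j' + j' <= Nlen r.
  by move=> H; rewrite Nlen_tri -triS tri_mono.
elim: j d => [|j IHj] // d _ Hjr.
elim: d => [|d IHd] Hd.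
- case: j IHj Hjr Hd => [|j] IHj Hjr _; first by rewrite take0 subn0 stage_start.
  rewrite addn0 triS addnS subn0 -stage_next_block.
  have Hletter : nth 0 (long_word r) (tri j.+1 + j) = 1.
    by have := nth_long_word (leqnn 1) (ltn0Sn j) (ltnW Hjr); rewrite subn1.
  apply: (bzl_step _ _ _ _ Hletter) => //; first exact: ltnW.
    by have := HN j.+1 (ltnW Hjr); lia.
  by have := IHj j (ltn0Sn _) (ltnW Hjr) (ltnSn _); rewrite subSnn.
- have Hletter : nth 0 (long_word r) (tri j.+1 + d) = j.+1 - d.
    by have := nth_long_word (_ : 1 <= j.+1 - d) (leq_subr d j.+1) Hjr; rewrite subKn //; lia.
  rewrite addnS (_ : j.+1 - d.+1 = (j.+1 - d).-1); last lia.
  apply: (bzl_step _ _ _ _ Hletter (IHd _)) => //; try lia.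
  by have := HN j.+1 Hjr; lia.
Qed.

End Path.

Lemma count_le_split (s : seq nat) v :
  count (fun x => x <= v) s = size s - count (fun x => v.+1 <= x) s.
Proof.
have Hhigh : count (predC (fun x => x <= v)) s = count (fun x => v.+1 <= x) s.
  by apply: eq_count => x /=; rewrite ltnNge.
by rewrite -(count_predC (fun x => x <= v) s) Hhigh addnK.
Qed.

Section Counting.
Variables (r : nat) (sh : nat -> nat) (b : tableau) (i j : nat).
Hypothesis Hb : is_SSYT r sh b.
Hypothesis Hsh : forall p, 1 <= p < r -> sh p.+1 <= sh p.
Hypothesis Hi : 1 <= i.
Hypothesis Hij : i <= j.
Hypothesis Hjr : j <= r.

Let Hsize : size b = r := ssyt_size Hb.

Lemma count_row_stage : count (pred1 i) (row (stage b j i) i) = sh i - bb r b i j.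
Proof.
have Hir : i.-1 < r by lia.
rewrite /row nth_stage ?Hsize // count_map prednK //.
rewrite (@eq_in_count _ _ (fun x => x <= j)); last first.
  move=> x Hx; have := ssyt_row_mem Hb Hsh Hir Hx.
  by rewrite prednK // /preim /= /relabel; do !(case: ifP => ?); lia.
rewrite /bb ifF; last lia.
by rewrite count_le_split (ssyt_row_size Hb Hir) prednK.
Qed.

Lemma count_next_row_stage : i < r ->
  count (pred1 i.+1) (row (stage b j i) i.+1) = sh i.+1 - bb r b i.+1 j.+1.
Proof.
move=> Hir; rewrite /row /= nth_stage ?Hsize // count_map.
rewrite (@eq_in_count _ _ (fun x => x <= j.+1)); last first.
  move=> x Hx; have := ssyt_row_mem Hb Hsh Hir Hx.
  by rewrite /preim /= /relabel; do !(case: ifP => ?); lia.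
rewrite count_le_split (ssyt_row_size Hb Hir) /bb; case: ifP => // Hj.
suff -> : count (fun x => j.+2 <= x) (nth [::] b i) = 0 by [].
apply/eqP; rewrite -leqn0 leqNgt -has_count; apply/hasP => -[x Hx /=].
by have := ssyt_row_mem Hb Hsh Hir Hx; lia.
Qed.

End Counting.

Lemma ell_last (m : seq nat) : ell m (size m).+1 = 0.
Proof. by rewrite /ell big_geq. Qed.

Theorem mainTheorem3 (r : nat) (m : seq nat) (b : tableau) (a : seq nat)
    (k i j : nat) :
  1 <= r -> size m = r ->
  is_SSYT r (ell m) b ->
  is_BZL_path r b a ->
  1 <= k <= Nlen r ->
  1 <= i -> i <= j -> j <= r ->
  k = j * j.-1 %/ 2 + (j - i + 1) ->
  exists b' : tableau,
    apply_e (take k.-1 (long_word r)) (take k.-1 a) b = Some b' /\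
    ell m i - bb r b i j = count (pred1 i) (row b' i) /\
    ell m i.+1 - bb r b i.+1 j.+1 = count (pred1 i.+1) (row b' i.+1).
Proof.
move=> _ Hm Hb Ha _ Hi Hij Hjr Ek.
have Hsh p : 1 <= p < r -> ell m p.+1 <= ell m p by move=> Hp; apply: ell_step; lia.
exists (stage b j i); split; last split.
- have -> : k.-1 = tri j + (j - i) by rewrite Ek /tri; lia.
  by rewrite -{3}(subKn Hij); apply: (bzl_prefix_stage Hb Hsh Ha); lia.
- by rewrite (count_row_stage Hb Hsh).
- case: (ltnP i r) => Hir; first by rewrite (count_next_row_stage Hb Hsh).
  have -> : i = r by lia.
  by rewrite /row nth_default ?size_stage ?(ssyt_size Hb) // /bb eqxx -Hm ell_last.
Qed.
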